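(* For objects $V,W$ of $\mathcal{E}_q^{deg}$, $$\mathrm{Hom}_{\mathcal{F}_{iso}}(iso_V,iso_W)\cong\begin{cases}\mathbb{F}_2[O(V)]&\text{if }W\cong V,\\0&\text{otherwise,}\end{cases}$$ where $O(V)$ is the group of isometries of $V$.
   Context: $\mathcal{E}$: all $\mathbb{F}_2$-vector spaces. $\mathcal{E}_q^{deg}$: objects finite-dimensional quadratic spaces over $\mathbb{F}_2$ (possibly degenerate), morphisms injective linear maps preserving quadratic forms. $\mathrm{Sp}(\mathcal{E}_q^{deg})$: same objects, morphisms spans $[V\leftarrow D\rightarrow W]$ up to iso of $D$, composed by pullback. $\mathcal{F}_{iso}=\mathrm{Func}(\mathrm{Sp}(\mathcal{E}_q^{deg}),\mathcal{E})$. $Q_V=\mathbb{F}_2[\mathrm{Hom}_{\mathrm{Sp}(\mathcal{E}_q^{deg})}(V,-)]$; $D F=(-)^*\circ F\circ tr^{op}$ with $tr[V\leftarrow X\rightarrow W]=[W\leftarrow X\rightarrow V]$; $a_V:Q_V\to DQ_V$ corresponds by Yoneda to the linear form on $\mathbb{F}_2[\mathrm{End}(V)]$ equal to $1$ on $\mathrm{Id}_V$ and $0$ on all other basis elements; the isotropic functor $iso_V$ is the image of $a_V$. *)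

From HB Require Import structures.
From mathcomp Require Import all_boot all_order all_algebra.
Set Implicit Arguments. Unset Strict Implicit. Unset Printing Implicit Defensive.
Import GRing.Theory.
Local Open Scope ring_scope.

(* Ground field F_2; vectors of an n-dimensional space are row vectors 'rV_n,
   linear maps are x |-> x *m A. *)
Notation F2 := 'F_2.

Definition polar n (q : 'rV[F2]_n -> F2) (x y : 'rV[F2]_n) : F2 :=
  q (x + y) - q x - q y.

Definition is_quadratic n (q : 'rV[F2]_n -> F2) : Prop :=
  (forall (a : F2) x, q (a *: x) = a ^+ 2 * q x) /\
  (forall x x' y, polar q (x + x') y = polar q x y + polar q x' y) /\
  (forall (a : F2) x y, polar q (a *: x) y = a * polar q x y).

(* Objects of E_q^deg : finite-dimensional quadratic spaces over F_2. *)
Record qspace := QSpace {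
  qdim : nat;
  qform : 'rV[F2]_qdim -> F2;
  qform_quad : is_quadratic qform }.
Arguments qform : clear implicits.

Definition vec (V : qspace) := 'rV[F2]_(qdim V).

Definition is_Emor (V W : qspace) (A : 'M[F2]_(qdim V, qdim W)) : Prop :=
  row_free A /\ forall x : vec V, qform W (x *m A) = qform V x.

Arguments is_Emor : clear implicits.
Definition qiso (V W : qspace) : Prop :=
  exists (A : 'M[F2]_(qdim V, qdim W)) (B : 'M[F2]_(qdim W, qdim V)),
    [/\ is_Emor V W A, is_Emor W V B, A *m B = 1%:M & B *m A = 1%:M].

Definition isometryb (V : qspace) (A : 'M[F2]_(qdim V)) : bool :=
  (A \in unitmx) && [forall x : vec V, qform V (x *m A) == qform V x].
Definition Ortho (V : qspace) := {A : 'M[F2]_(qdim V) | isometryb A}.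

(* An isomorphism class of spans [V <- D -> W] (legs injective isometries) is
   encoded by the image of D in V x W: a subspace S of V x W on which both
   projections are injective and q_V(p1 s) = q_W(p2 s) (this is the form of D).
   Composition by pullback is then relational composition. *)
Definition spanb (V W : qspace) (S : {set vec V * vec W}) : bool :=
  [&& ((0 : vec V), (0 : vec W)) \in S,
      [forall s in S, forall t in S, (s.1 + t.1, s.2 + t.2) \in S],
      [forall y : vec W, (((0 : vec V), y) \in S) ==> (y == 0)],
      [forall x : vec V, ((x, (0 : vec W)) \in S) ==> (x == 0)] &
      [forall s in S, qform V s.1 == qform W s.2]].

Definition Hom (V W : qspace) := {S : {set vec V * vec W} | spanb S}.

Definition relcomp (A B C : finType) (S : {set A * B}) (T : {set B * C})
  : {set A * C} :=
  [set p | [exists b, ((p.1, b) \in S) && ((b, p.2) \in T)]].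

Definition trset (A B : finType) (S : {set A * B}) : {set B * A} :=
  [set p | (p.2, p.1) \in S].

Definition diagset (A : finType) : {set A * A} := [set p | p.1 == p.2].

Record fdata := FData {
  Fobj : qspace -> vectType F2;
  Fmor : forall X Y : qspace, Hom X Y -> Fobj X -> Fobj Y }.

Definition natfam (F G : fdata) := forall X : qspace, Fobj F X -> Fobj G X.

Definition is_nat (F G : fdata) (eta : natfam F G) : Prop :=
  (forall X, linear (eta X)) /\
  (forall X Y (T : Hom X Y) (x : Fobj F X),
      eta Y (Fmor T x) = Fmor T (eta X x)).

(* Q_V(X) = F_2[Hom(V,X)], functions Hom(V,X) -> F_2 (basis: Dirac functions). *)
Definition QVobj (V X : qspace) : vectType F2 := {ffun Hom V X -> F2^o}.

(* action of a span T : X -> Y (given by its set) : [S] |-> [S ; T] *)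
Definition QVact (V X Y : qspace) (T : {set vec X * vec Y}) (f : QVobj V X)
  : QVobj V Y :=
  [ffun R : Hom V Y => \sum_(S : Hom V X | relcomp (val S) T == val R) f S].

Arguments QVact : clear implicits.

(* D Q_V (X) = Q_V(X)^*, with D Q_V(T) = (Q_V(tr T))^* *)
Definition DQobj (V X : qspace) : vectType F2 := 'Hom(QVobj V X, F2^o).

Definition DQact (V X Y : qspace) (T : Hom X Y) (l : DQobj V X) : DQobj V Y :=
  linfun (fun g : QVobj V Y => l (QVact V Y X (trset (val T)) g)).

Arguments DQact : clear implicits.

Definition phiV (V : qspace) : DQobj V V :=
  linfun (fun g : QVobj V V =>
            \sum_(S : Hom V V | val S == diagset (vec V)) g S).

(* a_V : Q_V -> D Q_V, the map corresponding to phiV by Yoneda: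
   [S] |-> D Q_V(S)(phiV) *)
Definition aV (V X : qspace) : 'Hom(QVobj V X, DQobj V X) :=
  linfun (fun f : QVobj V X =>
            \sum_(S : Hom V X) (f S : F2) *: DQact V V X S (phiV V)).

Definition isoSp (V X : qspace) : {vspace DQobj V X} := limg (aV V X).

Definition isoobj (V X : qspace) : vectType F2 := subvs_of (isoSp V X).

Definition isomor (V X Y : qspace) (T : Hom X Y) (x : isoobj V X)
  : isoobj V Y :=
  vsproj (isoSp V Y) (DQact V X Y T (vsval x)).

Definition isoF (V : qspace) : fdata := FData (@isomor V).

(* Over F_2 a span is determined by its graph, and the composite of R with the
   transpose of S is the identity span exactly when R = S and the left leg of R
   is onto.  Hence a_V([S]) is the Kronecker delta at S when the left leg of S
   is onto and is 0 otherwise; iso_V is spanned by these forms, and a natural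
   transformation out of iso_V is determined by its value at the image of Id_V.
   Write that value for eta : iso_V -> iso_W as sum_S f(S) a_W([S]), S : W -> V.
   Transporting by the transpose of S and evaluating at Id_W isolates f(S), and
   naturality forces it to vanish unless tr S also has an onto left leg, i.e.
   unless S is an isomorphism; so eta = 0 when V and W are not isomorphic.  If
   B : W -> V is an isomorphism, the spans with onto left leg are the graphs of
   B s, s in O(V), and precomposition with their transposes gives one natural
   transformation per isometry; the coefficients of eta(Id_V) are its
   coordinates in this basis. *)

From Pilot Require Import Defs.
From HB Require Import structures.
From mathcomp Require Import all_boot all_order all_algebra.
Set Implicit Arguments. Unset Strict Implicit. Unset Printing Implicit Defensive.
Import GRing.Theory.
Local Open Scope ring_scope.
Local Notation vec := Defs.vec.
Local Notation Hom := Defs.Hom.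

Section LinearFunctions.
Variables (aT rT : vectType F2) (f : aT -> rT).
Hypothesis f_lin : linear f.

Lemma linfunE_of u : linfun f u = f u.
Proof.
pose F : {linear aT -> rT} := HB.pack f (GRing.isLinear.Build F2 aT rT *:%R f f_lin).
exact: (lfunE F u).
Qed.

Lemma linear0_of : f 0 = 0.
Proof. by rewrite -linfunE_of linear0. Qed.

Lemma linearZ_of a u : f (a *: u) = a *: f u.
Proof. by rewrite -!linfunE_of linearZ. Qed.

Lemma linear_sum_of (I : finType) (P : pred I) (F : I -> aT) :
  f (\sum_(i | P i) F i) = \sum_(i | P i) f (F i).
Proof.
by rewrite -linfunE_of linear_sum; apply: eq_bigr => i _; exact: linfunE_of.
Qed.

End LinearFunctions.

Lemma F2_cases (a : F2) : a = 0 \/ a = 1.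
Proof. by case: a => [[|[|n]]] //= lt_n2; [left|right]; apply: val_inj. Qed.

Lemma addvv_F2 (U : lmodType F2) (u : U) : u + u = 0.
Proof.
have F2pchar : 2%N \in [pchar F2] by exact: pchar_Fp.
by rewrite -[u]scale1r -scalerDl (addrr_pchar2 F2pchar) scale0r.
Qed.

Lemma oppv_F2 (U : lmodType F2) (u : U) : - u = u.
Proof. by rewrite -[LHS]add0r -(addvv_F2 u) addrK. Qed.

Lemma addv_eq0 (U : lmodType F2) (u v : U) : (u + v == 0) = (u == v).
Proof. by rewrite -[u == v]subr_eq0 oppv_F2. Qed.

Section Spans.
Variables X Y : qspace.
Implicit Type S : Hom X Y.

Lemma span_mem0 S : ((0 : vec X), (0 : vec Y)) \in val S.
Proof. by case: S => S /= /and5P[]. Qed.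

Lemma span_memD S x y x' y' :
  (x, y) \in val S -> (x', y') \in val S -> (x + x', y + y') \in val S.
Proof.
case: S => S /= /and5P[_ /forallP closedS _ _ _] Sxy Sxy'.
by have /implyP/(_ Sxy)/forallP/(_ (x', y'))/implyP/(_ Sxy') := closedS (x, y).
Qed.

Lemma span_memZ S a x y : (x, y) \in val S -> (a *: x, a *: y) \in val S.
Proof. by have [->|->] := F2_cases a; rewrite ?scale1r // !scale0r span_mem0. Qed.

Lemma span_fst0 S y : ((0 : vec X), y) \in val S -> y = 0.
Proof.
case: S => S /= /and5P[_ _ /forallP kerS _ _] Sy.
by have /implyP/(_ Sy)/eqP := kerS y.
Qed.

Lemma span_snd0 S x : (x, (0 : vec Y)) \in val S -> x = 0.
Proof.
case: S => S /= /and5P[_ _ _ /forallP kerS _] Sx.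
by have /implyP/(_ Sx)/eqP := kerS x.
Qed.

Lemma span_qform S x y : (x, y) \in val S -> qform Y y = qform X x.
Proof.
case: S => S /= /and5P[_ _ _ _ /forallP qS] Sxy.
by have /implyP/(_ Sxy)/eqP := qS (x, y).
Qed.

Lemma span_functional S x y y' : (x, y) \in val S -> (x, y') \in val S -> y = y'.
Proof.
move=> Sxy Sxy'; have := span_memD Sxy Sxy'.
by rewrite addvv_F2 => /span_fst0/eqP; rewrite addv_eq0 => /eqP.
Qed.

Lemma span_injective S x x' y : (x, y) \in val S -> (x', y) \in val S -> x = x'.
Proof.
move=> Sxy Sx'y; have := span_memD Sxy Sx'y.
by rewrite addvv_F2 => /span_snd0/eqP; rewrite addv_eq0 => /eqP.
Qed.

Lemma spanb_intro (T : {set vec X * vec Y}) :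
  ((0 : vec X), (0 : vec Y)) \in T ->
  (forall x y x' y', (x, y) \in T -> (x', y') \in T -> (x + x', y + y') \in T) ->
  (forall y, ((0 : vec X), y) \in T -> y = 0) ->
  (forall x, (x, (0 : vec Y)) \in T -> x = 0) ->
  (forall x y, (x, y) \in T -> qform X x = qform Y y) -> spanb T.
Proof.
move=> T0 TD Tfst Tsnd Tq; apply/and5P; split=> //.
- apply/forallP=> -[x y]; apply/implyP=> Txy; apply/forallP=> -[x' y'].
  exact/implyP/TD.
- by apply/forallP=> y; apply/implyP=> /Tfst ->.
- by apply/forallP=> x; apply/implyP=> /Tsnd ->.
- by apply/forallP=> -[x y]; apply/implyP=> /Tq ->.
Qed.

End Spans.

Lemma in_relcomp (A B C : finType) (S : {set A * B}) (T : {set B * C}) a c :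
  ((a, c) \in relcomp S T) = [exists b, ((a, b) \in S) && ((b, c) \in T)].
Proof. by rewrite inE. Qed.

Lemma in_trset (A B : finType) (S : {set A * B}) a b :
  ((b, a) \in trset S) = ((a, b) \in S).
Proof. by rewrite inE. Qed.

Lemma in_diagset (A : finType) (a a' : A) : ((a, a') \in diagset A) = (a == a').
Proof. by rewrite inE. Qed.

Lemma relcompA (A B C D : finType) (S : {set A * B}) (T : {set B * C}) (U : {set C * D}) :
  relcomp (relcomp S T) U = relcomp S (relcomp T U).
Proof.
apply/setP=> -[a d]; rewrite !in_relcomp; apply/existsP/existsP.
  move=> [c /andP[]]; rewrite in_relcomp => /existsP[b /andP[Sab Tbc]] Ucd.
  by exists b; rewrite Sab in_relcomp; apply/existsP; exists c; rewrite Tbc.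
move=> [b /andP[Sab]]; rewrite in_relcomp => /existsP[c /andP[Tbc Ucd]].
by exists c; rewrite Ucd in_relcomp andbT; apply/existsP; exists b; rewrite Sab.
Qed.

Lemma relcomp_diagr (A B : finType) (S : {set A * B}) : relcomp S (diagset B) = S.
Proof.
apply/setP=> -[a b]; rewrite in_relcomp; apply/existsP/idP => [[b']|Sab].
  by rewrite in_diagset => /andP[Sab' /eqP <-].
by exists b; rewrite Sab in_diagset eqxx.
Qed.

Lemma relcomp_diagl (A B : finType) (S : {set A * B}) : relcomp (diagset A) S = S.
Proof.
apply/setP=> -[a b]; rewrite in_relcomp; apply/existsP/idP => [[a']|Sab].
  by rewrite in_diagset => /andP[/eqP -> Sa'b].
by exists a; rewrite Sab in_diagset eqxx.
Qed.

Lemma trsetK (A B : finType) (S : {set A * B}) : trset (trset S) = S.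
Proof. by apply/setP=> -[a b]; rewrite !in_trset. Qed.

Lemma trset_relcomp (A B C : finType) (S : {set A * B}) (T : {set B * C}) :
  trset (relcomp S T) = relcomp (trset T) (trset S).
Proof.
apply/setP=> -[c a]; rewrite in_trset !in_relcomp.
by apply/existsP/existsP=> -[b Hb]; exists b; move: Hb; rewrite !in_trset andbC.
Qed.

Lemma trset_diag (A : finType) : trset (diagset A) = diagset A.
Proof. by apply/setP=> -[a a']; rewrite in_trset !in_diagset eq_sym. Qed.

(* For the graph of a span [V <- D -> W], this says that D -> V is onto. *)
Definition left_total (A B : finType) (S : {set A * B}) :=
  [forall a, exists b, (a, b) \in S].

Lemma left_total_diag (A : finType) : left_total (diagset A).
Proof. by apply/forallP=> a; apply/existsP; exists a; rewrite in_diagset. Qed.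

Section SpanCategory.
Variables X Y Z : qspace.

Lemma relcomp_spanb (S : Hom X Y) (T : Hom Y Z) : spanb (relcomp (val S) (val T)).
Proof.
apply: spanb_intro => [|x z x' z'|z|x|x z]; rewrite ?in_relcomp.
- by apply/existsP; exists 0; rewrite !span_mem0.
- move=> /existsP[y /andP[Sxy Tyz]] /existsP[y' /andP[Sxy' Tyz']].
  by apply/existsP; exists (y + y'); rewrite (span_memD Sxy Sxy') (span_memD Tyz Tyz').
- by move=> /existsP[y /andP[/span_fst0 -> /span_fst0]].
- by move=> /existsP[y /andP[Sxy Ty0]]; move: Sxy; rewrite (span_snd0 Ty0) => /span_snd0.
- by move=> /existsP[y /andP[/span_qform <- /span_qform <-]].
Qed.

Definition comp_span (S : Hom X Y) (T : Hom Y Z) : Hom X Z :=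
  exist (@spanb X Z) _ (relcomp_spanb S T).

Lemma trset_spanb (S : Hom X Y) : spanb (trset (val S)).
Proof.
apply: spanb_intro => [|y x y' x'|x|y|y x]; rewrite ?in_trset.
- exact: span_mem0.
- exact: span_memD.
- exact: span_snd0.
- exact: span_fst0.
- exact: span_qform.
Qed.

Definition tr_span (S : Hom X Y) : Hom Y X := exist (@spanb Y X) _ (trset_spanb S).

Lemma diagset_spanb : spanb (diagset (vec X)).
Proof.
apply: spanb_intro => [|x y x' y'|y|x|x y]; rewrite ?in_diagset //.
- by move=> /eqP -> /eqP ->.
- by move=> /eqP.
- by move=> /eqP.
- by move=> /eqP ->.
Qed.

Definition id_span : Hom X X := exist (@spanb X X) _ diagset_spanb.

Lemma relcomp_trset_diagE (R S : Hom X Y) :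
  (relcomp (val R) (trset (val S)) == diagset (vec X))
  = (R == S) && left_total (val R).
Proof.
apply/eqP/andP => [RS1 | [/eqP <- /forallP Rtot]].
  have common x : exists y, ((x, y) \in val R) && ((x, y) \in val S).
    have : (x, x) \in relcomp (val R) (trset (val S)) by rewrite RS1 in_diagset.
    by rewrite in_relcomp => /existsP[y]; rewrite in_trset; exists y.
  split.
    apply/eqP/val_inj/setP => -[x y]; have [y' /andP[Rxy' Sxy']] := common x.
    by apply/idP/idP => [/(span_functional Rxy') <- | /(span_functional Sxy') <-].
  by apply/forallP => x; have [y /andP[Rxy _]] := common x; apply/existsP; exists y.
apply/setP => -[x x']; rewrite in_relcomp in_diagset.
apply/existsP/eqP => [[y]|<-].
  by rewrite in_trset => /andP[Rxy Rx'y]; apply: span_injective Rxy Rx'y.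
by have /existsP[y Rxy] := Rtot x; exists y; rewrite in_trset Rxy.
Qed.

End SpanCategory.

Lemma sum_partition (R : nmodType) (I J : finType) (h : I -> J) (Q : pred J)
    (F : I -> R) :
  \sum_(j | Q j) \sum_(i | h i == j) F i = \sum_(i | Q (h i)) F i.
Proof.
rewrite (partition_big h Q) //=; apply: eq_bigr => j Qj; apply: eq_bigl => i.
by case: eqP => [->|]; rewrite ?andbT ?andbF.
Qed.

Lemma sum_pred1_natr (I : finType) (P : pred I) (j : I) :
  \sum_(i | P i) ((i == j)%:R : F2) = (P j)%:R.
Proof.
rewrite big_mkcond (bigD1 j) //= eqxx big1 ?addr0; first by case: (P j).
by move=> i /negbTE ->; case: (P i).
Qed.

Lemma QVact_is_linear (V X Y : qspace) (T : {set vec X * vec Y}) :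
  linear (QVact V X Y T).
Proof.
move=> a u v; apply/ffunP => R; rewrite !ffunE.
rewrite (eq_bigr (fun S => a * u S + v S)) => [|S _]; last by rewrite !ffunE.
by rewrite big_split /= -mulr_sumr.
Qed.

HB.instance Definition _ (V X Y : qspace) (T : {set vec X * vec Y}) :=
  GRing.isLinear.Build F2 (QVobj V X) (QVobj V Y) *:%R (QVact V X Y T)
    (@QVact_is_linear V X Y T).

Lemma DQactE V X Y (T : Hom X Y) (l : DQobj V X) g :
  DQact V X Y T l g = l (QVact V Y X (trset (val T)) g).
Proof. by rewrite /DQact linfunE_of // => a u v; rewrite !linearP. Qed.

Lemma DQact_is_linear V X Y (T : Hom X Y) : linear (DQact V X Y T).
Proof.
move=> a l l'; apply/lfunP => g.
by rewrite add_lfunE scale_lfunE !DQactE add_lfunE scale_lfunE.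
Qed.

HB.instance Definition _ V X Y (T : Hom X Y) :=
  GRing.isLinear.Build F2 (DQobj V X) (DQobj V Y) *:%R (DQact V X Y T)
    (@DQact_is_linear V X Y T).

Lemma phiVE V (g : QVobj V V) : phiV V g = g (id_span V).
Proof.
rewrite /phiV linfunE_of; first by rewrite (big_pred1 (id_span V)).
move=> a u v; rewrite (eq_bigr (fun S => a * u S + v S)) => [|S _]; last first.
  by rewrite !ffunE.
by rewrite big_split /= -mulr_sumr.
Qed.

Lemma aVE V X (f : QVobj V X) :
  aV V X f = \sum_(S : Hom V X) (f S : F2) *: DQact V V X S (phiV V).
Proof.
rewrite /aV linfunE_of // => a u v; rewrite scaler_sumr -big_split /=.
by apply: eq_bigr => S _; rewrite !ffunE scalerDl scalerA.
Qed.

Lemma QVact_comp V X Y Z (T : Hom X Y) (U : Hom Y Z) (g : QVobj V X) :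
  QVact V Y Z (val U) (QVact V X Y (val T) g) = QVact V X Z (val (comp_span T U)) g.
Proof.
apply/ffunP => R; rewrite !ffunE.
rewrite (eq_bigr (fun R1 => \sum_(S | comp_span S T == R1) g S)) => [|R1 _].
  rewrite (sum_partition (fun S => comp_span S T)
            (fun R1 => relcomp (val R1) (val U) == val R)).
  by apply: eq_bigl => S /=; rewrite relcompA.
by rewrite ffunE; apply: eq_bigl => S; rewrite -val_eqE.
Qed.

Lemma DQact_comp V X Y Z (T : Hom X Y) (U : Hom Y Z) (l : DQobj V X) :
  DQact V Y Z U (DQact V X Y T l) = DQact V X Z (comp_span T U) l.
Proof.
apply/lfunP => g; rewrite !DQactE.
have -> : trset (val (comp_span T U)) = val (comp_span (tr_span U) (tr_span T)).
  exact: trset_relcomp.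
exact: congr1 (QVact_comp (tr_span U) (tr_span T) g).
Qed.

Lemma DQact_id V X (l : DQobj V X) : DQact V X X (id_span X) l = l.
Proof.
apply/lfunP => g; rewrite DQactE /= trset_diag; congr (l _).
apply/ffunP => R; rewrite ffunE (big_pred1 R) // => S /=.
by rewrite relcomp_diagr val_eqE.
Qed.

Definition dirac V X (S : Hom V X) : QVobj V X := [ffun S' => (S' == S)%:R].

(* The image under a_V of the basis element [S] of Q_V(X). *)
Definition iso_gen V X (S : Hom V X) : DQobj V X := DQact V V X S (phiV V).

Lemma iso_genE V X (S : Hom V X) g :
  iso_gen S g
  = \sum_(R : Hom V X | relcomp (val R) (trset (val S)) == diagset (vec V)) g R.
Proof. by rewrite /iso_gen DQactE phiVE ffunE. Qed.

Lemma iso_gen_dirac V X (S R : Hom V X) :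
  iso_gen S (dirac R) = ((R == S) && left_total (val R))%:R.
Proof.
rewrite iso_genE (eq_bigr (fun R' => ((R' == R)%:R : F2))) => [|R' _].
  by rewrite (eq_bigl _ _ (fun R' => relcomp_trset_diagE R' S)) sum_pred1_natr.
by rewrite ffunE.
Qed.

Lemma iso_gen_nontotal V X (S : Hom V X) : ~~ left_total (val S) -> iso_gen S = 0.
Proof.
move=> Sntot; apply/lfunP => g; rewrite iso_genE zero_lfunE big_pred0 // => R.
by rewrite relcomp_trset_diagE; case: eqP => // ->; apply: negbTE.
Qed.

Lemma iso_gen_comp_tr_id V X (R S : Hom V X) :
  iso_gen (comp_span R (tr_span S)) (dirac (id_span V))
  = ((R == S) && left_total (val R))%:R.
Proof.
rewrite iso_gen_dirac left_total_diag andbT.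
by rewrite eq_sym -val_eqE /= relcomp_trset_diagE.
Qed.

Lemma DQact_iso_gen V X Y (S : Hom V X) (T : Hom X Y) :
  DQact V X Y T (iso_gen S) = iso_gen (comp_span S T).
Proof. exact: DQact_comp. Qed.

Lemma iso_gen_coord V X (f : QVobj V X) (S : Hom V X) : left_total (val S) ->
  DQact V X V (tr_span S) (\sum_R f R *: iso_gen R) (dirac (id_span V)) = f S.
Proof.
move=> Stot; rewrite linear_sum sum_lfunE (bigD1 S) //= big1 => [|R neRS].
  rewrite linearZ /= scale_lfunE DQact_iso_gen iso_gen_comp_tr_id eqxx Stot addr0.
  exact: mulr1.
rewrite linearZ /= scale_lfunE DQact_iso_gen iso_gen_comp_tr_id (negbTE neRS).
exact: mulr0.
Qed.

Lemma iso_gen_in_isoSp V X (S : Hom V X) : iso_gen S \in isoSp V X.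
Proof.
have -> : iso_gen S = aV V X (dirac S).
  rewrite aVE (bigD1 S) //= big1 => [|S' /negbTE neS'S]; last first.
    by rewrite ffunE neS'S scale0r.
  by rewrite ffunE eqxx scale1r addr0.
exact/memv_img/memvf.
Qed.

Lemma isoSpP V X (l : DQobj V X) :
  l \in isoSp V X -> exists f : QVobj V X, l = \sum_S f S *: iso_gen S.
Proof. by case/memv_imgP => f _ ->; exists f; rewrite aVE. Qed.

Lemma DQact_isoSp V X Y (T : Hom X Y) l :
  l \in isoSp V X -> DQact V X Y T l \in isoSp V Y.
Proof.
case/isoSpP => f ->; rewrite linear_sum; apply: rpred_sum => S _.
by rewrite linearZ /= DQact_iso_gen rpredZ // iso_gen_in_isoSp.
Qed.

Lemma vsval_isomor V X Y (T : Hom X Y) (x : isoobj V X) :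
  vsval (isomor T x) = DQact V X Y T (vsval x).
Proof. by rewrite vsprojK // DQact_isoSp // subvsP. Qed.

Definition iso_unit V : isoobj V V := vsproj (isoSp V V) (phiV V).

Lemma iso_unitE V : vsval (iso_unit V) = phiV V.
Proof. by rewrite vsprojK // -(DQact_id (phiV V)) iso_gen_in_isoSp. Qed.

Lemma isoobj_span V X (x : isoobj V X) :
  exists f : QVobj V X, x = \sum_S f S *: isomor S (iso_unit V).
Proof.
have [f Ef] := isoSpP (subvsP x); exists f.
rewrite -[x]vsvalK Ef linear_sum; apply: eq_bigr => S _.
by rewrite linearZ /= /isomor iso_unitE.
Qed.

Section NaturalTransformations.
Variables V W : qspace.

Lemma nat_iso_unit_eq (e1 e2 : natfam (isoF V) (isoF W)) :
  is_nat e1 -> is_nat e2 -> e1 V (iso_unit V) = e2 V (iso_unit V) ->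
  forall X x, e1 X x = e2 X x.
Proof.
move=> [e1_lin e1_nat] [e2_lin e2_nat] e12 X x; have [f ->] := isoobj_span x.
rewrite !linear_sum_of //; apply: eq_bigr => S _; rewrite !linearZ_of //.
have /= -> := e1_nat V X S (iso_unit V); have /= -> := e2_nat V X S (iso_unit V).
by rewrite e12.
Qed.

Lemma is_nat0 : @is_nat (isoF V) (isoF W) (fun X _ => 0).
Proof.
split=> [X a u v | X Y T x] /=; first by rewrite scaler0 addr0.
by apply: val_inj; rewrite /= vsval_isomor !linear0.
Qed.

End NaturalTransformations.

Section SpanMatrix.
Variables X Y : qspace.
Implicit Type S : Hom X Y.

Definition span_fun S (x : vec X) : vec Y := odflt 0 [pick y | (x, y) \in val S].

Lemma span_funE S x y : (x, y) \in val S -> span_fun S x = y.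
Proof.
rewrite /span_fun; case: pickP => [y' Sxy'|/(_ y) -> //] /= Sxy.
exact: span_functional Sxy' Sxy.
Qed.

Lemma span_fun_mem S x : left_total (val S) -> (x, span_fun S x) \in val S.
Proof. by move=> /forallP/(_ x)/existsP[y Sxy]; rewrite (span_funE Sxy). Qed.

Definition span_mx S : 'M[F2]_(qdim X, qdim Y) :=
  \matrix_i span_fun S (delta_mx 0 i).

Lemma span_mx_mem S u : left_total (val S) -> (u, u *m span_mx S) \in val S.
Proof.
move=> Stot; rewrite mulmx_sum_row {1}[u]row_sum_delta.
apply: (big_ind2 (fun x y => (x, y) \in val S)) => [|x y x' y'|i _].
- exact: span_mem0.
- exact: span_memD.
- by rewrite rowK; apply/span_memZ/span_fun_mem.
Qed.

Lemma span_mx_functional S u v :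
  left_total (val S) -> (u, v) \in val S -> v = u *m span_mx S.
Proof. by move=> Stot Suv; apply: span_functional Suv (span_mx_mem u Stot). Qed.

End SpanMatrix.

Lemma qiso_of_bitotal V W (S : Hom W V) :
  left_total (val S) -> left_total (val (tr_span S)) -> qiso V W.
Proof.
move=> Stot Sttot; set A := span_mx (tr_span S); set B := span_mx S.
have SuA u : (u *m A, u) \in val S by rewrite -in_trset; exact: span_mx_mem.
have AB : A *m B = 1%:M.
  apply/eqP/mulmxP => u; rewrite mulmxA mulmx1.
  by rewrite -(span_mx_functional Stot (SuA u)).
have BA : B *m A = 1%:M.
  apply/eqP/mulmxP => w; rewrite mulmxA mulmx1.
  have StwB : (w *m B, w) \in val (tr_span S) by rewrite /= in_trset span_mx_mem.
  by rewrite -(span_mx_functional Sttot StwB).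
exists A, B; split=> //; split.
- by apply/row_freeP; exists B.
- by move=> u; rewrite (span_qform (SuA u)).
- by apply/row_freeP; exists A.
- by move=> w; apply: span_qform (span_mx_mem w Stot).
Qed.

Lemma nat_noniso V W (eta : natfam (isoF V) (isoF W)) :
  ~ qiso V W -> is_nat eta -> forall X x, eta X x = 0.
Proof.
move=> nVW eta_nat; apply: (nat_iso_unit_eq eta_nat (is_nat0 V W)).
have [eta_lin eta_comm] := eta_nat.
have [f Ef] := isoSpP (subvsP (eta V (iso_unit V))).
have f0 S : left_total (val S) -> f S = 0.
  move=> Stot; rewrite -(iso_gen_coord f Stot) -Ef -vsval_isomor.
  have := eta_comm V W (tr_span S) (iso_unit V); rewrite /= => <-.
  have -> : isomor (tr_span S) (iso_unit V) = 0.
    apply: (can_inj vsvalK); rewrite vsval_isomor iso_unitE linear0.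
    by apply: iso_gen_nontotal; apply/negP => /(qiso_of_bitotal Stot).
  by rewrite (linear0_of (eta_lin W)) linear0 zero_lfunE.
apply: (can_inj vsvalK); rewrite Ef linear0 big1 // => S _.
have [Stot | Sntot] := boolP (left_total (val S)); first by rewrite f0 // scale0r.
by rewrite iso_gen_nontotal // scaler0.
Qed.

Lemma tr_spanK X Y (S : Hom X Y) : tr_span (tr_span S) = S.
Proof. exact/val_inj/trsetK. Qed.

Lemma comp_span_id X Y (S : Hom X Y) : comp_span S (id_span Y) = S.
Proof. exact/val_inj/relcomp_diagr. Qed.

Lemma relcomp_trset_diag X Y (S : Hom X Y) :
  left_total (val S) -> relcomp (val S) (trset (val S)) = diagset (vec X).
Proof. by move=> Stot; apply/eqP; rewrite relcomp_trset_diagE eqxx. Qed.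

Section Graphs.
Variables W V : qspace.
Implicit Type M : 'M[F2]_(qdim W, qdim V).

Definition graphset M : {set vec W * vec V} := [set s | s.2 == s.1 *m M].

Lemma in_graphset M w v : ((w, v) \in graphset M) = (v == w *m M).
Proof. by rewrite inE. Qed.

Lemma graphset_spanb M : is_Emor W V M -> spanb (graphset M).
Proof.
move=> [Mfree Mq]; apply: spanb_intro => [|w v w' v'|v|w|w v]; rewrite ?in_graphset.
- by rewrite mul0mx.
- by move=> /eqP -> /eqP ->; rewrite mulmxDl.
- by rewrite mul0mx => /eqP.
- by rewrite eq_sym => /eqP wM0; apply: (row_free_inj Mfree); rewrite wM0 mul0mx.
- by move=> /eqP ->; rewrite Mq.
Qed.

Definition graph_span M (HM : is_Emor W V M) : Hom W V :=
  exist (@spanb W V) _ (graphset_spanb HM).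

Lemma graph_span_total M (HM : is_Emor W V M) : left_total (val (graph_span HM)).
Proof. by apply/forallP => w; apply/existsP; exists (w *m M); rewrite in_graphset. Qed.

Lemma is_Emor_mulmx_isometry M (s : 'M[F2]_(qdim V)) :
  is_Emor W V M -> isometryb s -> is_Emor W V (M *m s).
Proof.
move=> [Mfree Mq] /andP[s_unit /forallP sq]; split.
  by rewrite /row_free mxrankMfree ?row_free_unit.
by move=> x; rewrite mulmxA (eqP (sq _)) Mq.
Qed.

End Graphs.

Section Conjugation.
Variables V W X : qspace.
Variable G : Hom V W.

Definition QVpre (f : QVobj W X) : QVobj V X :=
  [ffun R' : Hom V X => \sum_(R : Hom W X | relcomp (val G) (val R) == val R') f R].

Lemma QVpre_is_linear : linear QVpre.
Proof.
move=> a u v; apply/ffunP => R; rewrite !ffunE.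
rewrite (eq_bigr (fun S => a * u S + v S)) => [|S _]; last by rewrite !ffunE.
by rewrite big_split /= -mulr_sumr.
Qed.

HB.instance Definition _ :=
  GRing.isLinear.Build F2 (QVobj W X) (QVobj V X) *:%R QVpre QVpre_is_linear.

Definition DQpre (l : DQobj V X) : DQobj W X := linfun (fun g => l (QVpre g)).

Lemma DQpreE l g : DQpre l g = l (QVpre g).
Proof. by rewrite /DQpre linfunE_of // => a u v; rewrite !linearP. Qed.

Lemma DQpre_is_linear : linear DQpre.
Proof.
move=> a l l'; apply/lfunP => g.
by rewrite add_lfunE scale_lfunE !DQpreE add_lfunE scale_lfunE.
Qed.

HB.instance Definition _ :=
  GRing.isLinear.Build F2 (DQobj V X) (DQobj W X) *:%R DQpre DQpre_is_linear.

End Conjugation.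

Lemma QVpre_QVact V W X Y (G : Hom V W) (U : Hom Y X) (g : QVobj W Y) :
  QVpre G (QVact W Y X (val U) g) = QVact V Y X (val U) (QVpre G g).
Proof.
apply/ffunP => R'; rewrite !ffunE.
rewrite (eq_bigr (fun R => \sum_(S | comp_span S U == R) g S)) => [|R _]; last first.
  by rewrite ffunE; apply: eq_bigl => S; rewrite -val_eqE.
rewrite (sum_partition (fun S => comp_span S U)
          (fun R => relcomp (val G) (val R) == val R')).
rewrite (eq_bigr (fun R1 => \sum_(S | comp_span G S == R1) g S)) => [|R _]; last first.
  by rewrite ffunE; apply: eq_bigl => S; rewrite -val_eqE.
rewrite (sum_partition (fun S => comp_span G S)
          (fun R1 => relcomp (val R1) (val U) == val R')).
by apply: eq_bigl => S /=; rewrite relcompA.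
Qed.

Lemma DQact_DQpre V W X Y (G : Hom V W) (T : Hom X Y) (l : DQobj V X) :
  DQact W X Y T (DQpre G l) = DQpre G (DQact V X Y T l).
Proof.
by apply/lfunP => g; rewrite DQactE !DQpreE DQactE (QVpre_QVact G (tr_span T)).
Qed.

Lemma relcomp_conj_diag (A B : finType) (G : {set A * B}) (G' K : {set B * A}) :
  relcomp G G' = diagset A -> relcomp G' G = diagset B ->
  (relcomp G K == diagset A) = (relcomp K G == diagset B).
Proof.
move=> GG' G'G; apply/eqP/eqP => GK.
  transitivity (relcomp (relcomp G' G) (relcomp K G)); first by rewrite G'G relcomp_diagl.
  by rewrite relcompA -(relcompA G K G) GK relcomp_diagl G'G.
transitivity (relcomp (relcomp G K) (relcomp G G')); first by rewrite GG' relcomp_diagr.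
by rewrite relcompA -(relcompA K G G') GK relcomp_diagl GG'.
Qed.

Lemma DQpre_iso_gen V W X (G : Hom V W) (S : Hom V X) :
  left_total (val G) -> left_total (val (tr_span G)) ->
  DQpre G (iso_gen S) = iso_gen (comp_span (tr_span G) S).
Proof.
move=> Gtot Gttot; have GG' := relcomp_trset_diag Gtot.
have G'G := relcomp_trset_diag Gttot; rewrite /= trsetK in G'G.
apply/lfunP => g; rewrite DQpreE !iso_genE.
rewrite (eq_bigr (fun R1 => \sum_(R | comp_span G R == R1) g R)) => [|R _]; last first.
  by rewrite ffunE; apply: eq_bigl => S'; rewrite -val_eqE.
rewrite (sum_partition (fun R => comp_span G R)
          (fun R1 => relcomp (val R1) (trset (val S)) == diagset (vec V))).
apply: eq_bigl => R /=.
by rewrite relcompA (relcomp_conj_diag _ GG' G'G) trset_relcomp trsetK relcompA.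
Qed.

Section IsometricSpaces.
Variables (V W : qspace) (A : 'M[F2]_(qdim V, qdim W)) (B : 'M[F2]_(qdim W, qdim V)).
Hypotheses (HA : is_Emor V W A) (HB : is_Emor W V B).
Hypotheses (AB : A *m B = 1%:M) (BA : B *m A = 1%:M).

Definition iso_span (s : Ortho V) : Hom W V :=
  graph_span (is_Emor_mulmx_isometry HB (valP s)).

Lemma iso_span_tr_total s : left_total (val (tr_span (iso_span s))).
Proof.
apply/forallP => v; apply/existsP; exists (v *m invmx (val s) *m A).
have /andP[s_unit _] := valP s.
by rewrite /= in_trset in_graphset !mulmxA -(mulmxA _ A) AB mulmx1 mulmxKV.
Qed.

Lemma iso_span_inj : injective iso_span.
Proof.
move=> s t st; apply/val_inj/eqP/mulmxP => u.
have : (u *m A, u *m A *m (B *m val s)) \in val (iso_span t).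
  by rewrite -st in_graphset.
by rewrite in_graphset !mulmxA -(mulmxA u) AB mulmx1 => /eqP.
Qed.

Lemma iso_span_onto (S : Hom W V) : left_total (val S) -> exists s, iso_span s = S.
Proof.
move=> Stot; set M := span_mx S.
have AM_iso : isometryb (A *m M).
  apply/andP; split.
    rewrite -row_free_unit; apply: inj_row_free => u; rewrite mulmxA => uAM0.
    have := span_mx_mem (u *m A) Stot; rewrite uAM0 => /span_snd0 uA0.
    by rewrite -[u]mulmx1 -AB mulmxA uA0 mul0mx.
  apply/forallP => x; rewrite mulmxA.
  by rewrite (span_qform (span_mx_mem (x *m A) Stot)) (proj2 HA).
exists (exist (@isometryb V) _ AM_iso); apply/val_inj/setP => -[w v].
rewrite /= in_graphset /= !mulmxA -(mulmxA w B A) BA mulmx1.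
by apply/eqP/idP => [->|/(span_mx_functional Stot) ->]; rewrite ?span_mx_mem.
Qed.

Lemma DQpre_iso_span s X (S : Hom V X) :
  DQpre (tr_span (iso_span s)) (iso_gen S) = iso_gen (comp_span (iso_span s) S).
Proof.
by rewrite DQpre_iso_gen ?tr_spanK ?iso_span_tr_total ?graph_span_total.
Qed.

Lemma DQpre_iso_span_phiV s :
  DQpre (tr_span (iso_span s)) (phiV V) = iso_gen (iso_span s).
Proof. by rewrite -{1}(DQact_id (phiV V)) DQpre_iso_span comp_span_id. Qed.

Lemma DQpre_iso_span_isoSp s X l :
  l \in isoSp V X -> DQpre (tr_span (iso_span s)) l \in isoSp W X.
Proof.
case/isoSpP => f ->; rewrite linear_sum; apply: rpred_sum => S _.
by rewrite linearZ /= DQpre_iso_span rpredZ // iso_gen_in_isoSp.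
Qed.

Definition Psi (c : {ffun Ortho V -> F2}) : natfam (isoF V) (isoF W) :=
  fun X x =>
    vsproj (isoSp W X) (\sum_s c s *: DQpre (tr_span (iso_span s)) (vsval x)).
Arguments Psi : clear implicits.

Lemma Psi_isoSp c X (x : isoobj V X) :
  \sum_s c s *: DQpre (tr_span (iso_span s)) (vsval x) \in isoSp W X.
Proof.
by apply: rpred_sum => s _; rewrite rpredZ // DQpre_iso_span_isoSp ?subvsP.
Qed.

Lemma Psi_is_nat c : is_nat (Psi c).
Proof.
split=> [X a x y | X Y T x].
  rewrite /Psi -linearP; congr (vsproj _ _).
  rewrite linearP scaler_sumr -big_split /=; apply: eq_bigr => s _.
  by rewrite linearP /= scalerDr !scalerA mulrC.
rewrite /= /Psi /isomor vsprojK ?DQact_isoSp ?subvsP // vsprojK ?Psi_isoSp //.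
congr (vsproj _ _); rewrite linear_sum; apply: eq_bigr => s _.
by rewrite linearZ /= DQact_DQpre.
Qed.

Lemma Psi_linear (a : F2) (c c' : {ffun Ortho V -> F2}) X (x : isoobj V X) :
  Psi [ffun s => a * c s + c' s] X x = a *: Psi c X x + Psi c' X x.
Proof.
rewrite /Psi -linearP; congr (vsproj _ _).
rewrite scaler_sumr -big_split /=; apply: eq_bigr => s _.
by rewrite ffunE scalerDl scalerA.
Qed.

Lemma Psi_iso_unit c :
  vsval (Psi c V (iso_unit V)) = \sum_s c s *: iso_gen (iso_span s).
Proof.
rewrite vsprojK ?Psi_isoSp // iso_unitE; apply: eq_bigr => s _.
by rewrite DQpre_iso_span_phiV.
Qed.

Lemma isoSp_iso_span l : l \in isoSp W V ->
  exists c : {ffun Ortho V -> F2}, l = \sum_s c s *: iso_gen (iso_span s).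
Proof.
case/isoSpP => f ->; exists [ffun s => f (iso_span s)].
rewrite (bigID (fun S => left_total (val S))) /= [X in _ + X]big1 => [|S]; last first.
  by move/iso_gen_nontotal ->; rewrite scaler0.
have -> : \sum_(S | left_total (val S)) f S *: iso_gen S
          = \sum_(S in iso_span @: setT) f S *: iso_gen S.
  apply: eq_bigl => S; apply/idP/imsetP => [/iso_span_onto[s <-]|[s _ ->]].
    by exists s.
  exact: graph_span_total.
rewrite addr0 big_imset /= => [|s t _ _]; last exact: iso_span_inj.
by apply: eq_big => [s|s _]; rewrite ?in_setT ?ffunE.
Qed.

Lemma iso_span_coord (c : {ffun Ortho V -> F2}) s :
  (\sum_t c t *: iso_gen (iso_span t)) (dirac (iso_span s)) = c s.
Proof.
rewrite sum_lfunE (bigD1 s) //= big1 ?addr0 => [|t nts].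
  by rewrite scale_lfunE iso_gen_dirac eqxx graph_span_total; exact: mulr1.
rewrite scale_lfunE iso_gen_dirac (inj_eq iso_span_inj) eq_sym (negbTE nts).
exact: mulr0.
Qed.

Lemma Psi_unique (eta : natfam (isoF V) (isoF W)) : is_nat eta ->
  exists! c, forall X x, eta X x = Psi c X x.
Proof.
move=> eta_nat; have [c Ec] := isoSp_iso_span (subvsP (eta V (iso_unit V))).
have eta_Psi : eta V (iso_unit V) = Psi c V (iso_unit V).
  by apply: (can_inj vsvalK); rewrite Ec Psi_iso_unit.
exists c; split=> [|c' eta_Psi']; first exact: nat_iso_unit_eq (Psi_is_nat c) eta_Psi.
apply/ffunP => s; rewrite -(iso_span_coord c s) -(iso_span_coord c' s).
by rewrite -!Psi_iso_unit -eta_Psi eta_Psi'.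
Qed.

End IsometricSpaces.

Theorem corollary4p33 (V W : qspace) :
  (qiso V W ->
     exists Psi : {ffun Ortho V -> F2} -> natfam (isoF V) (isoF W),
       [/\ forall c, is_nat (Psi c),
           forall eta : natfam (isoF V) (isoF W), is_nat eta ->
             exists! c : {ffun Ortho V -> F2},
               forall X (x : Fobj (isoF V) X), eta X x = Psi c X x
         & forall (a : F2) (c c' : {ffun Ortho V -> F2}) X
                  (x : Fobj (isoF V) X),
             Psi [ffun g => a * c g + c' g] X x
             = a *: Psi c X x + Psi c' X x])
  /\
  (~ qiso V W ->
     forall eta : natfam (isoF V) (isoF W), is_nat eta ->
       forall X (x : Fobj (isoF V) X), eta X x = 0).
Proof.
split=> [[A [B [HA HB AB BA]]] | nVW eta eta_nat]; last exact: nat_noniso.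
exists (Psi HB); split.
- exact: Psi_is_nat AB.
- exact: Psi_unique HA HB AB BA.
- exact: Psi_linear.
Qed.
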